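(* The monomials $X_1^rX_2^s(X_2^* )^t(X_1^* )^u(Q')^v$, $r,s,t,u,v\in\mathbb Z_{\ge0}$, where $Q'=Q-X_1X_1^*-X_2X_2^*$, form a $\mathbb C$-linear basis of $\mathcal X$.
   Context: Fix $0<q<1$. $\mathcal X$ is the unital complex $*$-algebra generated by $X_1,X_1^*,X_2,X_2^*,Q$ with involution $(X_i)^*=X_i^*$, $Q^*=Q$, subject to the relations $X_1X_2=qX_2X_1$, $X_1^*X_2=qX_2X_1^*$, $X_2^*X_2=q^2X_2X_2^*+(1-q^2)Q$, $X_1^*X_1=q^2X_1X_1^*+(1-q^2)(Q-X_2X_2^* )$, $Q$ central, together with the $*$-images of these relations. *)

From HB Require Import structures.
From mathcomp Require Import all_boot all_order all_algebra.
From mathcomp Require Import complex reals.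
Set Implicit Arguments. Unset Strict Implicit. Unset Printing Implicit Defensive.
Import Order.TTheory GRing.Theory Num.Theory.
Local Open Scope ring_scope.
Local Open Scope complex_scope.

Definition gen := 'I_5.
Definition gX1  : gen := @Ordinal 5 0 isT.
Definition gX1s : gen := @Ordinal 5 1 isT.
Definition gX2  : gen := @Ordinal 5 2 isT.
Definition gX2s : gen := @Ordinal 5 3 isT.
Definition gQ   : gen := @Ordinal 5 4 isT.

Section FreeAlg.
Variable R : realType.
Local Notation C := (R[i]).

(* Noncommutative polynomials over C in the letters gen: functions from words
   to coefficients (the free algebra consists of the finitely supported ones). *)
Definition elt := seq gen -> C.

Definition ezero : elt := fun _ => 0.
Definition eadd (f g : elt) : elt := fun w => f w + g w.
Definition escale (a : C) (f : elt) : elt := fun w => a * f w.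
Definition esub (f g : elt) : elt := eadd f (escale (-1) g).
Definition emul (f g : elt) : elt :=
  fun w => \sum_(i < (size w).+1) f (take i w) * g (drop i w).
Definition eword (u : seq gen) : elt := fun w => (w == u)%:R.
Definition eone : elt := eword [::].
Definition egen (x : gen) : elt := eword [:: x].
Definition epow (f : elt) (n : nat) : elt := iter n (emul f) eone.

Definition fin_supp (f : elt) : Prop :=
  exists s : seq (seq gen), forall w, w \notin s -> f w = 0.

Definition X1 := egen gX1.
Definition X1s := egen gX1s.
Definition X2 := egen gX2.
Definition X2s := egen gX2s.
Definition Q := egen gQ.

Definition Q' : elt := esub (esub Q (emul X1 X1s)) (emul X2 X2s).

(* The defining relations of \mathcal X (each written as lhs - rhs),
   together with their *-images. *)
Definition rels (q : R) : seq elt :=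
  let qc : C := q%:C in
  [:: esub (emul X1 X2) (escale qc (emul X2 X1));
      esub (emul X1s X2) (escale qc (emul X2 X1s));
      esub (emul X2s X2) (eadd (escale (qc ^+ 2) (emul X2 X2s)) (escale (1 - qc ^+ 2) Q));
      esub (emul X1s X1) (eadd (escale (qc ^+ 2) (emul X1 X1s))
                               (escale (1 - qc ^+ 2) (esub Q (emul X2 X2s))));
      esub (emul Q X1) (emul X1 Q);
      esub (emul Q X1s) (emul X1s Q);
      esub (emul Q X2) (emul X2 Q);
      esub (emul Q X2s) (emul X2s Q);
      (* *-images of the first two relations (the others are self-adjoint
         or have *-images already in the list) *)
      esub (emul X2s X1s) (escale qc (emul X1s X2s));
      esub (emul X2s X1) (escale qc (emul X1 X2s))].

Inductive in_ideal (q : R) : elt -> Prop :=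
| ideal_rel i : (i < size (rels q))%N -> in_ideal q (nth (@ezero) (rels q) i)
| ideal_add f g : in_ideal q f -> in_ideal q g -> in_ideal q (eadd f g)
| ideal_scale a f : in_ideal q f -> in_ideal q (escale a f)
| ideal_lmul u f : in_ideal q f -> in_ideal q (emul (eword u) f)
| ideal_rmul u f : in_ideal q f -> in_ideal q (emul f (eword u))
| ideal_ext f g : in_ideal q f -> (forall w, f w = g w) -> in_ideal q g.

Definition idx := (nat * nat * nat * nat * nat)%type.
Definition mono (m : idx) : elt :=
  let '(r, s, t, u, v) := m in
  emul (emul (emul (emul (epow X1 r) (epow X2 s)) (epow X2s t)) (epow X1s u))
       (epow Q' v).

Definition lincomb (s : seq idx) (c : idx -> C) : elt :=
  foldr (fun m acc => eadd (escale (c m) (mono m)) acc) ezero s.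

End FreeAlg.

From HB Require Import structures.
From mathcomp Require Import all_boot all_order all_algebra.
From mathcomp Require Import complex reals boolp.
From mathcomp Require Import ring zify.
Set Implicit Arguments. Unset Strict Implicit. Unset Printing Implicit Defensive.
Import Order.TTheory GRing.Theory Num.Theory.
Local Open Scope ring_scope.
Local Open Scope complex_scope.

(* Spanning: modulo the relations every generator can be moved past an ordered
   monomial X1^r X2^s X2*^t X1*^u Q'^v.  The key point is that Q' = Q - X1 X1* - X2 X2*
   q^(+-2)-commutes with X1, X2, X1*, X2*, and Q = Q' + X1 X1* + X2 X2*; so left
   multiplication by a generator preserves the span of the ordered monomials, by
   induction on the exponents.

   Independence: the would-be left regular representation of the algebra on the
   ordered monomials is written down by explicit matrices acting on formal
   combinations of monomials.  These matrices satisfy the defining relations, so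
   the free algebra acts and the ideal acts by zero; applied to the monomial 1, a
   combination sum_m c_m * monomial_m gives back the coefficients c_m. *)

Section FreeAlgebra.
Variable R : realType.
Local Notation C := (R[i]).
Local Notation E := (elt R).

Lemma emulDl (f g h : E) : emul (eadd f g) h = eadd (emul f h) (emul g h).
Proof. by apply: funext => w; rewrite /emul /eadd -big_split; apply: eq_bigr => i _; rewrite mulrDl. Qed.

Lemma emulDr (f g h : E) : emul f (eadd g h) = eadd (emul f g) (emul f h).
Proof. by apply: funext => w; rewrite /emul /eadd -big_split; apply: eq_bigr => i _; rewrite mulrDr. Qed.

Lemma emulZl a (f g : E) : emul (escale a f) g = escale a (emul f g).
Proof. by apply: funext => w; rewrite /emul /escale mulr_sumr; apply: eq_bigr => i _; rewrite mulrA. Qed.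

Lemma emulZr a (f g : E) : emul f (escale a g) = escale a (emul f g).
Proof. by apply: funext => w; rewrite /emul /escale mulr_sumr; apply: eq_bigr => i _; rewrite mulrCA. Qed.

Lemma emul0l (f : E) : emul (ezero R) f = ezero R.
Proof. by apply: funext => w; rewrite /emul /ezero big1 // => i _; rewrite mul0r. Qed.

Lemma emul0r (f : E) : emul f (ezero R) = ezero R.
Proof. by apply: funext => w; rewrite /emul /ezero big1 // => i _; rewrite mulr0. Qed.

Lemma emul_eword (a b : seq gen) : emul (eword R a) (eword R b) = eword R (a ++ b).
Proof.
apply: funext => w; rewrite /emul /eword.
have [->|neq] := eqVneq w (a ++ b).
  have ha : (size a < (size (a ++ b)).+1)%N by rewrite size_cat ltnS leq_addr.
  rewrite (bigD1 (Ordinal ha)) //= take_size_cat // drop_size_cat // !eqxx mulr1.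
  rewrite big1 ?addr0 // => i /eqP ni.
  case: eqP => ia; last by rewrite mul0r.
  exfalso; apply: ni; apply: val_inj => /=.
  have := ltn_ord i; rewrite ltnS => il.
  by move: (size_takel il); rewrite ia => ->.
rewrite big1 // => i _.
case: eqP => ia; last by rewrite mul0r.
case: eqP => ib; last by rewrite mulr0.
by move: neq; rewrite -ia -ib cat_take_drop eqxx.
Qed.

Lemma emul1l (f : E) : emul (eone R) f = f.
Proof.
apply: funext => w; rewrite /emul /eone /eword big_ord_recl /= take0 eqxx mul1r drop0.
rewrite big1 ?addr0 // => i _.
have hi : (bump 0 i <= size w)%N by have := ltn_ord (lift ord0 i).
suff /negbTE -> : take (bump 0 i) w != [::] by rewrite mul0r.
by rewrite -size_eq0 size_takel.
Qed.

Lemma emulE (f g : E) w :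
  emul f g w = \sum_(0 <= i < (size w).+1) f (take i w) * g (drop i w).
Proof. by rewrite big_mkord. Qed.

Lemma emulA (f g h : E) : emul (emul f g) h = emul f (emul g h).
Proof.
apply: funext => w; rewrite !emulE.
set n := size w.
pose F j i := f (take j w) * g (take (i - j) (drop j w)) * h (drop i w).
transitivity (\sum_(0 <= i < n.+1) \sum_(0 <= j < n.+1 | (j < i.+1)%N) F j i).
  rewrite big_nat_cond [RHS]big_nat_cond; apply: eq_bigr => i /andP[/andP[_ lin] _].
  rewrite ltnS in lin.
  rewrite emulE size_takel // (@big_nat_widen _ _ _ 0 i.+1 n.+1) // mulr_suml.
  apply: eq_bigr => j /= ji.
  by rewrite /F take_takel // take_drop subnK.
transitivity (\sum_(0 <= j < n.+1) \sum_(0 <= i < n.+1 | (j <= i)%N) F j i).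
  by rewrite (@exchange_big_dep_nat _ _ _ 0 n.+1 0 n.+1 xpredT (fun i j => (j < i.+1)%N) xpredT).
rewrite big_nat_cond [RHS]big_nat_cond; apply: eq_bigr => j /andP[/andP[_ jn] _].
rewrite ltnS in jn.
rewrite emulE size_drop mulr_sumr.
rewrite -(@big_nat_widenl _ _ _ j 0 n.+1 xpredT) // -{1}(add0n j) big_addn subSn //.
apply: eq_bigr => k _.
by rewrite /F addnK mulrA drop_drop.
Qed.

Lemma sum_indicator (T : eqType) (s : seq T) v (G : T -> C) : uniq s ->
  \sum_(w <- s) ((w == v)%:R * G w) = if v \in s then G v else 0.
Proof.
elim: s => [|x s IH] /=; first by rewrite big_nil.
move=> /andP[xs us]; rewrite big_cons IH // inE.
case: (eqVneq x v) => [<-|nvx] /=; first by rewrite mul1r (negbTE xs) addr0.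
by rewrite mul0r add0r.
Qed.

Definition supp_below (f : E) N := forall w, (N <= size w)%N -> f w = 0.
Definition bounded (f : E) := exists N, supp_below f N.

Lemma supp_below_eword u : supp_below (eword R u) (size u).+1.
Proof. by move=> w hw; rewrite /eword; case: eqP => // ew; rewrite ew ltnn in hw. Qed.

Lemma supp_below_add f g N M :
  supp_below f N -> supp_below g M -> supp_below (eadd f g) (maxn N M).
Proof.
move=> hf hg w hw; rewrite /eadd hf ?hg ?addr0 //; apply: leq_trans hw;
  by rewrite ?leq_maxl ?leq_maxr.
Qed.

Lemma supp_below_scale a f N : supp_below f N -> supp_below (escale a f) N.
Proof. by move=> hf w hw; rewrite /escale hf ?mulr0. Qed.

Lemma supp_below_mul f g N M :
  supp_below f N -> supp_below g M -> supp_below (emul f g) (N + M).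
Proof.
move=> hf hg w hw; rewrite emulE big1 // => i _.
case: (leqP N (size (take i w))) => hN; first by rewrite hf ?mul0r.
rewrite hg ?mulr0 //.
have := cat_take_drop i w; move=> /(congr1 size); rewrite size_cat => hs.
by rewrite -(leq_add2l (size (take i w))) hs; apply: leq_trans hw; rewrite leq_add2r ltnW.
Qed.

Lemma bounded_eword u : bounded (eword R u).
Proof. by exists (size u).+1; apply: supp_below_eword. Qed.

Lemma bounded_add f g : bounded f -> bounded g -> bounded (eadd f g).
Proof. by move=> [N hN] [M hM]; exists (maxn N M); apply: supp_below_add. Qed.

Lemma bounded_scale a f : bounded f -> bounded (escale a f).
Proof. by move=> [N hN]; exists N; apply: supp_below_scale. Qed.

Lemma bounded_sub f g : bounded f -> bounded g -> bounded (esub f g).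
Proof. by move=> hf hg; apply: bounded_add => //; apply: bounded_scale. Qed.

Lemma bounded_mul f g : bounded f -> bounded g -> bounded (emul f g).
Proof. by move=> [N hN] [M hM]; exists (N + M); apply: supp_below_mul. Qed.

Lemma bounded_epow f n : bounded f -> bounded (epow f n).
Proof. by move=> hf; elim: n => [|n IH]; [apply: bounded_eword | apply: bounded_mul]. Qed.

Lemma bounded_Q' : bounded (Q' R).
Proof. by do 2?apply: bounded_sub; do ?apply: bounded_mul; apply: bounded_eword. Qed.

Lemma bounded_mono m : bounded (mono R m).
Proof.
case: m => [[[[r s] t] u] v]; rewrite /mono.
apply: bounded_mul (bounded_epow _ bounded_Q').
have hw x n : bounded (epow (egen R x) n) by apply/bounded_epow/bounded_eword.
by do 3![apply: bounded_mul; last exact: hw]; exact: hw.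
Qed.

Fixpoint words_of_size n : seq (seq gen) :=
  if n is n'.+1 then [seq x :: w | x <- enum gen, w <- words_of_size n'] else [:: [::]].

Fixpoint words_below N : seq (seq gen) :=
  if N is N'.+1 then words_below N' ++ words_of_size N' else [::].

Lemma mem_words_of_size n w : (w \in words_of_size n) = (size w == n).
Proof.
elim: n w => [|n IH] w /=; first by rewrite inE size_eq0.
apply/allpairsP/idP => [[[x v] /= [_ hv ->]]|]; first by rewrite /= eqSS -IH.
case: w => [//|x v] /=; rewrite eqSS -IH => hv.
by exists (x, v); rewrite mem_enum.
Qed.

Lemma uniq_words_of_size n : uniq (words_of_size n).
Proof.
elim: n => [//|n IH] /=.
apply: allpairs_uniq => //; first exact: enum_uniq.
by move=> [x v] [y u] _ _ /= [-> ->].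
Qed.

Lemma mem_words_below N w : (w \in words_below N) = (size w < N)%N.
Proof.
elim: N => [//|N IH].
by rewrite /= mem_cat IH mem_words_of_size orbC -leq_eqVlt.
Qed.

Lemma uniq_words_below N : uniq (words_below N).
Proof.
elim: N => [//|N IH] /=; rewrite cat_uniq IH uniq_words_of_size andbT /=.
by apply/hasPn => w; rewrite mem_words_of_size mem_words_below => /eqP ->; rewrite ltnn.
Qed.

Definition ecomb (s : seq (seq gen)) (c : seq gen -> C) : E :=
  fun v => \sum_(w <- s) c w * eword R w v.

Lemma ecomb_nil c : ecomb [::] c = ezero R.
Proof. by apply: funext => v; rewrite /ecomb big_nil. Qed.

Lemma ecomb_cons w s c : ecomb (w :: s) c = eadd (escale (c w) (eword R w)) (ecomb s c).
Proof. by apply: funext => v; rewrite /ecomb big_cons. Qed.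

Lemma supp_below_ecomb f N : supp_below f N -> f = ecomb (words_below N) f.
Proof.
move=> hf; apply: funext => v; rewrite /ecomb.
under eq_bigr do rewrite /eword mulrC eq_sym.
rewrite sum_indicator ?uniq_words_below // mem_words_below.
by case: ltnP => // hv; rewrite hf.
Qed.

Lemma fin_supp_bounded f : fin_supp f -> bounded f.
Proof.
move=> [s hs]; exists (\max_(w <- s) size w).+1 => w hw; apply: hs.
apply/negP => ws; move: hw; rewrite ltnNge => /negP; apply.
by rewrite (leq_bigmax_seq _ ws).
Qed.

End FreeAlgebra.

Section Congruence.
Variables (R : realType) (q : R).
Local Notation E := (elt R).

Lemma in_ideal0 : in_ideal q (ezero R).
Proof.
apply: (@ideal_ext _ _ (escale 0 (nth (ezero R) (rels q) 0))).
  by apply: ideal_scale; apply: ideal_rel.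
by move=> w; rewrite /escale mul0r.
Qed.

Lemma in_ideal_lmul g f : bounded g -> in_ideal q f -> in_ideal q (emul g f).
Proof.
move=> [N /supp_below_ecomb ->] hf; elim: (words_below N) => [|w s IH].
  by rewrite ecomb_nil emul0l; apply: in_ideal0.
by rewrite ecomb_cons emulDl emulZl; apply: ideal_add => //; apply/ideal_scale/ideal_lmul.
Qed.

Lemma in_ideal_rmul g f : bounded g -> in_ideal q f -> in_ideal q (emul f g).
Proof.
move=> [N /supp_below_ecomb ->] hf; elim: (words_below N) => [|w s IH].
  by rewrite ecomb_nil emul0r; apply: in_ideal0.
by rewrite ecomb_cons emulDr emulZr; apply: ideal_add => //; apply/ideal_scale/ideal_rmul.
Qed.

Definition eqmod (f g : E) := in_ideal q (esub f g).

Lemma eqmod_by h f g : in_ideal q h -> esub f g = h -> eqmod f g.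
Proof. by move=> hh e; rewrite /eqmod e. Qed.

Lemma eqmod_of_eq f g : f = g -> eqmod f g.
Proof.
by move=> <-; apply: eqmod_by in_ideal0 _; apply: funext => w; rewrite /esub /eadd /escale /ezero; ring.
Qed.

Lemma eqmod_trans f g h : eqmod f g -> eqmod g h -> eqmod f h.
Proof.
move=> h1 h2; apply: eqmod_by (ideal_add h1 h2) _.
by apply: funext => w; rewrite /esub /eadd /escale; ring.
Qed.

Lemma eqmod_add f1 f2 g1 g2 : eqmod f1 g1 -> eqmod f2 g2 -> eqmod (eadd f1 f2) (eadd g1 g2).
Proof.
move=> h1 h2; apply: eqmod_by (ideal_add h1 h2) _.
by apply: funext => w; rewrite /esub /eadd /escale; ring.
Qed.

Lemma eqmod_scale a f g : eqmod f g -> eqmod (escale a f) (escale a g).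
Proof.
move=> h; apply: eqmod_by (ideal_scale a h) _.
by apply: funext => w; rewrite /esub /eadd /escale; ring.
Qed.

Lemma eqmod_lmul h f g : bounded h -> eqmod f g -> eqmod (emul h f) (emul h g).
Proof.
by move=> hb e; apply: eqmod_by (in_ideal_lmul hb e) _; rewrite /esub emulDr emulZr.
Qed.

End Congruence.

Section Spanning.
Variables (R : realType) (q : R).
Hypothesis q_gt0 : 0 < q.
Local Notation C := (R[i]).
Local Notation E := (elt R).
Local Notation p := (q%:C : C).
Local Notation x1 := (X1 R).
Local Notation x1s := (X1s R).
Local Notation x2 := (X2 R).
Local Notation x2s := (X2s R).
Local Notation eqmod := (eqmod q).

Lemma qC_neq0 : p != 0.
Proof. by rewrite gt_eqF // -[0]/((0:R)%:C) ltcR. Qed.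

Local Notation rX1X2 := (esub (emul x1 x2) (escale p (emul x2 x1))).
Local Notation rX1sX2 := (esub (emul x1s x2) (escale p (emul x2 x1s))).
Local Notation rX2sX2 := (esub (emul x2s x2)
  (eadd (escale (p ^+ 2) (emul x2 x2s)) (escale (1 - p ^+ 2) (Q R)))).
Local Notation rX1sX1 := (esub (emul x1s x1) (eadd (escale (p ^+ 2) (emul x1 x1s))
  (escale (1 - p ^+ 2) (esub (Q R) (emul x2 x2s))))).
Local Notation rQX1 := (esub (emul (Q R) x1) (emul x1 (Q R))).
Local Notation rQX1s := (esub (emul (Q R) x1s) (emul x1s (Q R))).
Local Notation rQX2 := (esub (emul (Q R) x2) (emul x2 (Q R))).
Local Notation rQX2s := (esub (emul (Q R) x2s) (emul x2s (Q R))).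
Local Notation rX2sX1s := (esub (emul x2s x1s) (escale p (emul x1s x2s))).
Local Notation rX2sX1 := (esub (emul x2s x1) (escale p (emul x1 x2s))).

Lemma rel_X1X2 : in_ideal q rX1X2. Proof. exact: (@ideal_rel R q 0 isT). Qed.
Lemma rel_X1sX2 : in_ideal q rX1sX2. Proof. exact: (@ideal_rel R q 1 isT). Qed.
Lemma rel_X2sX2 : in_ideal q rX2sX2. Proof. exact: (@ideal_rel R q 2 isT). Qed.
Lemma rel_X1sX1 : in_ideal q rX1sX1. Proof. exact: (@ideal_rel R q 3 isT). Qed.
Lemma rel_QX1 : in_ideal q rQX1. Proof. exact: (@ideal_rel R q 4 isT). Qed.
Lemma rel_QX1s : in_ideal q rQX1s. Proof. exact: (@ideal_rel R q 5 isT). Qed.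
Lemma rel_QX2 : in_ideal q rQX2. Proof. exact: (@ideal_rel R q 6 isT). Qed.
Lemma rel_QX2s : in_ideal q rQX2s. Proof. exact: (@ideal_rel R q 7 isT). Qed.
Lemma rel_X2sX1s : in_ideal q rX2sX1s. Proof. exact: (@ideal_rel R q 8 isT). Qed.
Lemma rel_X2sX1 : in_ideal q rX2sX1. Proof. exact: (@ideal_rel R q 9 isT). Qed.

Lemma in_ideal_ctx L r M : in_ideal q r -> bounded L -> bounded M ->
  in_ideal q (emul L (emul r M)).
Proof. by move=> hr hL hM; apply: in_ideal_lmul hL _; apply: in_ideal_rmul. Qed.

Ltac free_ring := rewrite /esub /Q';
  repeat (rewrite emulDl || rewrite emulDr || rewrite emulZl || rewrite emulZr || rewrite emulA);
  apply: funext => w; rewrite /eadd /escale.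

Let bx1 : bounded x1 := bounded_eword R [:: gX1].
Let bx1s : bounded x1s := bounded_eword R [:: gX1s].
Let bx2 : bounded x2 := bounded_eword R [:: gX2].
Let bx2s : bounded x2s := bounded_eword R [:: gX2s].

Section Commutation.
Variable M : E.
Hypothesis bM : bounded M.
Lemma comm_X2_X1 : eqmod (emul x2 (emul x1 M)) (escale p^-1 (emul x1 (emul x2 M))).
Proof.
apply: (eqmod_by (h := escale (- p^-1) (emul rX1X2 M))).
  exact/ideal_scale/in_ideal_rmul/rel_X1X2.
free_ring; field; exact: qC_neq0.
Qed.

Lemma comm_X2s_X1 : eqmod (emul x2s (emul x1 M)) (escale p (emul x1 (emul x2s M))).
Proof. by apply: (eqmod_by (in_ideal_rmul bM rel_X2sX1)); free_ring; ring. Qed.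

Lemma comm_X1s_X2 : eqmod (emul x1s (emul x2 M)) (escale p (emul x2 (emul x1s M))).
Proof. by apply: (eqmod_by (in_ideal_rmul bM rel_X1sX2)); free_ring; ring. Qed.

Lemma comm_X1s_X2s : eqmod (emul x1s (emul x2s M)) (escale p^-1 (emul x2s (emul x1s M))).
Proof.
apply: (eqmod_by (h := escale (- p^-1) (emul rX2sX1s M))).
  exact/ideal_scale/in_ideal_rmul/rel_X2sX1s.
free_ring; field; exact: qC_neq0.
Qed.

Lemma comm_X1s_X1 : eqmod (emul x1s (emul x1 M))
  (eadd (emul x1 (emul x1s M)) (escale (1 - p ^+ 2) (emul (Q' R) M))).
Proof. by apply: (eqmod_by (in_ideal_rmul bM rel_X1sX1)); free_ring; ring. Qed.

Lemma comm_X2s_X2 : eqmod (emul x2s (emul x2 M))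
  (eadd (emul x2 (emul x2s M))
        (escale (1 - p ^+ 2) (eadd (emul (Q' R) M) (emul x1 (emul x1s M))))).
Proof. by apply: (eqmod_by (in_ideal_rmul bM rel_X2sX2)); free_ring; ring. Qed.

Lemma comm_Q'_X1 : eqmod (emul (Q' R) (emul x1 M)) (escale (p ^+ 2) (emul x1 (emul (Q' R) M))).
Proof.
apply: (eqmod_by (h := eadd (emul rQX1 M) (eadd (escale (-1) (emul x1 (emul rX1sX1 M)))
   (eadd (escale (-1) (emul x2 (emul rX2sX1 M))) (emul rX1X2 (emul x2s M)))))).
  apply: ideal_add; first exact: in_ideal_rmul bM rel_QX1.
  apply: ideal_add; first exact/ideal_scale/(in_ideal_ctx rel_X1sX1 bx1 bM).
  apply: ideal_add; first exact/ideal_scale/(in_ideal_ctx rel_X2sX1 bx2 bM).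
  exact: in_ideal_rmul (bounded_mul bx2s bM) rel_X1X2.
free_ring; ring.
Qed.

Lemma comm_Q'_X2 : eqmod (emul (Q' R) (emul x2 M)) (escale (p ^+ 2) (emul x2 (emul (Q' R) M))).
Proof.
apply: (eqmod_by (h := eadd (emul rQX2 M) (eadd (escale (-1) (emul x1 (emul rX1sX2 M)))
   (eadd (escale (- p) (emul rX1X2 (emul x1s M))) (escale (-1) (emul x2 (emul rX2sX2 M))))))).
  apply: ideal_add; first exact: in_ideal_rmul bM rel_QX2.
  apply: ideal_add; first exact/ideal_scale/(in_ideal_ctx rel_X1sX2 bx1 bM).
  apply: ideal_add; first exact/ideal_scale/(in_ideal_rmul (bounded_mul bx1s bM))/rel_X1X2.
  exact/ideal_scale/(in_ideal_ctx rel_X2sX2 bx2 bM).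
free_ring; ring.
Qed.

Lemma comm_Q'_X1s :
  eqmod (emul (Q' R) (emul x1s M)) (escale (p ^+ 2)^-1 (emul x1s (emul (Q' R) M))).
Proof.
apply: (eqmod_by (h := escale (p ^+ 2)^-1 (eadd (emul rQX1s M) (eadd (emul rX1sX1 (emul x1s M))
   (eadd (emul rX1sX2 (emul x2s M)) (escale (-1) (emul x2 (emul rX2sX1s M)))))))).
  apply/ideal_scale/ideal_add; first exact: in_ideal_rmul bM rel_QX1s.
  apply: ideal_add; first exact: in_ideal_rmul (bounded_mul bx1s bM) rel_X1sX1.
  apply: ideal_add; first exact: in_ideal_rmul (bounded_mul bx2s bM) rel_X1sX2.
  exact/ideal_scale/(in_ideal_ctx rel_X2sX1s bx2 bM).
free_ring; field; exact: qC_neq0.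
Qed.

Lemma comm_Q'_X2s :
  eqmod (emul (Q' R) (emul x2s M)) (escale (p ^+ 2)^-1 (emul x2s (emul (Q' R) M))).
Proof.
apply: (eqmod_by (h := escale (p ^+ 2)^-1 (eadd (emul rQX2s M) (eadd (emul rX2sX1 (emul x1s M))
   (eadd (escale p (emul x1 (emul rX2sX1s M))) (emul rX2sX2 (emul x2s M))))))).
  apply/ideal_scale/ideal_add; first exact: in_ideal_rmul bM rel_QX2s.
  apply: ideal_add; first exact: in_ideal_rmul (bounded_mul bx1s bM) rel_X2sX1.
  apply: ideal_add; first exact/ideal_scale/(in_ideal_ctx rel_X2sX1s bx1 bM).
  exact: in_ideal_rmul (bounded_mul bx2s bM) rel_X2sX2.
free_ring; field; exact: qC_neq0.
Qed.

End Commutation.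

Definition mcomb (L : seq (C * idx)) : E :=
  foldr (fun x acc => eadd (escale x.1 (mono R x.2)) acc) (ezero R) L.

Definition spanned (f : E) := exists L, eqmod f (mcomb L).

Lemma mcomb_cat L1 L2 : mcomb (L1 ++ L2) = eadd (mcomb L1) (mcomb L2).
Proof.
elim: L1 => [|x L IH] /=; apply: funext => w; rewrite /eadd /ezero ?add0r //.
by rewrite IH /eadd addrA.
Qed.

Lemma mcomb_scale a L : mcomb [seq (a * x.1, x.2) | x <- L] = escale a (mcomb L).
Proof.
elim: L => [|x L IH] /=; apply: funext => w; rewrite /eadd /escale /ezero ?mulr0 //.
by rewrite IH /eadd /escale mulrDr mulrA.
Qed.

Lemma spanned_mono m : spanned (mono R m).
Proof.
by exists [:: (1, m)]; apply: eqmod_of_eq; apply: funext => w; rewrite /= /eadd /escale /ezero; ring.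
Qed.

Lemma spanned_eqmod f g : eqmod f g -> spanned g -> spanned f.
Proof. by move=> e [L hL]; exists L; exact: eqmod_trans e hL. Qed.

Lemma spanned0 : spanned (ezero R).
Proof. by exists [::]; apply: eqmod_of_eq. Qed.

Lemma spanned_add f g : spanned f -> spanned g -> spanned (eadd f g).
Proof.
by move=> [L1 h1] [L2 h2]; exists (L1 ++ L2); rewrite mcomb_cat; exact: eqmod_add.
Qed.

Lemma spanned_scale a f : spanned f -> spanned (escale a f).
Proof.
move=> [L h]; exists [seq (a * x.1, x.2) | x <- L].
by rewrite mcomb_scale; exact: eqmod_scale.
Qed.

Lemma spanned_lmul h f : bounded h -> (forall m, spanned (emul h (mono R m))) ->
  spanned f -> spanned (emul h f).
Proof.
move=> hb hm [L hL]; apply: spanned_eqmod (eqmod_lmul hb hL) _.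
elim: L {hL} => [|x L IH] /=; first by rewrite emul0r; exact: spanned0.
by rewrite emulDr emulZr; apply: spanned_add => //; apply: spanned_scale.
Qed.

Lemma mono0 : mono R (0, 0, 0, 0, 0) = eone R.
Proof. by rewrite /mono !emul1l. Qed.

Lemma mono_X1 r s t u v : mono R (r.+1, s, t, u, v) = emul x1 (mono R (r, s, t, u, v)).
Proof. by rewrite /mono /= !emulA. Qed.

Lemma mono_X2 s t u v : mono R (0, s.+1, t, u, v) = emul x2 (mono R (0, s, t, u, v)).
Proof. by rewrite /mono /= !emul1l !emulA. Qed.

Lemma mono_X2s t u v : mono R (0, 0, t.+1, u, v) = emul x2s (mono R (0, 0, t, u, v)).
Proof. by rewrite /mono /= !emul1l !emulA. Qed.

Lemma mono_X1s u v : mono R (0, 0, 0, u.+1, v) = emul x1s (mono R (0, 0, 0, u, v)).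
Proof. by rewrite /mono /= !emul1l !emulA. Qed.

Lemma mono_Q' v : mono R (0, 0, 0, 0, v.+1) = emul (Q' R) (mono R (0, 0, 0, 0, v)).
Proof. by rewrite /mono /= !emul1l. Qed.


Lemma spanned_X1 f : spanned f -> spanned (emul x1 f).
Proof.
apply: (spanned_lmul bx1) => -[[[[r s] t] u] v].
by rewrite -mono_X1; apply: spanned_mono.
Qed.

Lemma spanned_X2 f : spanned f -> spanned (emul x2 f).
Proof.
apply: (spanned_lmul bx2) => -[[[[r s] t] u] v].
elim: r => [|r IH]; first by rewrite -mono_X2; apply: spanned_mono.
rewrite mono_X1; apply: spanned_eqmod (comm_X2_X1 (bounded_mono _ _)) _.
exact/spanned_scale/spanned_X1.
Qed.

Lemma Q'_mono00 t u v :
  exists c, eqmod (emul (Q' R) (mono R (0, 0, t, u, v))) (escale c (mono R (0, 0, t, u, v.+1))).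
Proof.
elim: t => [|t [c hc]].
  elim: u => [|u [c hc]].
    by exists 1; apply: eqmod_of_eq; rewrite -mono_Q'; apply: funext => w; rewrite /escale mul1r.
  exists ((p ^+ 2)^-1 * c); rewrite mono_X1s.
  apply: eqmod_trans (comm_Q'_X1s (bounded_mono _ _)) _.
  apply: eqmod_trans (eqmod_scale _ (eqmod_lmul bx1s hc)) _.
  by apply: eqmod_of_eq; rewrite emulZr mono_X1s; apply: funext => w; rewrite /escale mulrA.
exists ((p ^+ 2)^-1 * c); rewrite mono_X2s.
apply: eqmod_trans (comm_Q'_X2s (bounded_mono _ _)) _.
apply: eqmod_trans (eqmod_scale _ (eqmod_lmul bx2s hc)) _.
by apply: eqmod_of_eq; rewrite emulZr mono_X2s; apply: funext => w; rewrite /escale mulrA.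
Qed.

Lemma X1s_mono00 t u v :
  exists c, eqmod (emul x1s (mono R (0, 0, t, u, v))) (escale c (mono R (0, 0, t, u.+1, v))).
Proof.
elim: t => [|t [c hc]].
  by exists 1; apply: eqmod_of_eq; rewrite -mono_X1s; apply: funext => w; rewrite /escale mul1r.
exists (p^-1 * c); rewrite mono_X2s.
apply: eqmod_trans (comm_X1s_X2s (bounded_mono _ _)) _.
apply: eqmod_trans (eqmod_scale _ (eqmod_lmul bx2s hc)) _.
by apply: eqmod_of_eq; rewrite emulZr mono_X2s; apply: funext => w; rewrite /escale mulrA.
Qed.

Lemma spanned_Q' f : spanned f -> spanned (emul (Q' R) f).
Proof.
apply: (spanned_lmul (bounded_Q' R)) => -[[[[r s] t] u] v].
elim: r => [|r IH]; last first.
  rewrite mono_X1; apply: spanned_eqmod (comm_Q'_X1 (bounded_mono _ _)) _.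
  exact/spanned_scale/spanned_X1.
elim: s => [|s IH]; last first.
  rewrite mono_X2; apply: spanned_eqmod (comm_Q'_X2 (bounded_mono _ _)) _.
  exact/spanned_scale/spanned_X2.
have [c hc] := Q'_mono00 t u v.
exact/(spanned_eqmod hc)/spanned_scale/spanned_mono.
Qed.

Lemma spanned_X1s f : spanned f -> spanned (emul x1s f).
Proof.
apply: (spanned_lmul bx1s) => -[[[[r s] t] u] v].
elim: r => [|r IH]; last first.
  rewrite mono_X1; apply: spanned_eqmod (comm_X1s_X1 (bounded_mono _ _)) _.
  by apply: spanned_add; [apply: spanned_X1 | apply/spanned_scale/spanned_Q'/spanned_mono].
elim: s => [|s IH]; last first.
  rewrite mono_X2; apply: spanned_eqmod (comm_X1s_X2 (bounded_mono _ _)) _.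
  exact/spanned_scale/spanned_X2.
have [c hc] := X1s_mono00 t u v.
exact/(spanned_eqmod hc)/spanned_scale/spanned_mono.
Qed.

Lemma spanned_X2s f : spanned f -> spanned (emul x2s f).
Proof.
apply: (spanned_lmul bx2s) => -[[[[r s] t] u] v].
elim: r => [|r IH]; last first.
  rewrite mono_X1; apply: spanned_eqmod (comm_X2s_X1 (bounded_mono _ _)) _.
  exact/spanned_scale/spanned_X1.
elim: s => [|s IH]; first by rewrite -mono_X2s; apply: spanned_mono.
rewrite mono_X2; apply: spanned_eqmod (comm_X2s_X2 (bounded_mono _ _)) _.
apply: spanned_add; first exact: spanned_X2.
apply/spanned_scale/spanned_add; first exact/spanned_Q'/spanned_mono.
exact/spanned_X1/spanned_X1s/spanned_mono.
Qed.

Lemma spanned_Q f : spanned f -> spanned (emul (Q R) f).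
Proof.
have -> : Q R = eadd (Q' R) (eadd (emul x1 x1s) (emul x2 x2s)).
  by apply: funext => w; rewrite /Q' /esub /eadd /escale; ring.
move=> hf; rewrite (emulDl (Q' R)) (emulDl (emul x1 x1s)) !emulA.
apply: spanned_add; first exact: spanned_Q'.
by apply: spanned_add; [apply/spanned_X1/spanned_X1s | apply/spanned_X2/spanned_X2s].
Qed.

Lemma spanned_egen (x : gen) f : spanned f -> spanned (emul (egen R x) f).
Proof.
case: x => [[|[|[|[|[|n]]]]] hx] //.
- by rewrite (_ : Ordinal hx = gX1); [exact: spanned_X1 | exact: val_inj].
- by rewrite (_ : Ordinal hx = gX1s); [exact: spanned_X1s | exact: val_inj].
- by rewrite (_ : Ordinal hx = gX2); [exact: spanned_X2 | exact: val_inj].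
- by rewrite (_ : Ordinal hx = gX2s); [exact: spanned_X2s | exact: val_inj].
- by rewrite (_ : Ordinal hx = gQ); [exact: spanned_Q | exact: val_inj].
Qed.

Lemma spanned_bounded f : bounded f -> spanned f.
Proof.
move=> [N /supp_below_ecomb ->]; elim: (words_below N) => [|w s IH].
  by rewrite ecomb_nil; exact: spanned0.
rewrite ecomb_cons; apply/spanned_add/IH/spanned_scale.
elim: w => [|x w IHw]; first by rewrite -[eword R [::]]/(eone R) -mono0; exact: spanned_mono.
by rewrite -cat1s -emul_eword; apply: spanned_egen.
Qed.

Lemma mcomb_lincomb L :
  mcomb L = lincomb (undup (map snd L)) (fun m => \sum_(x <- L | x.2 == m) x.1).
Proof.
have sum_mono (I : Type) (F : I -> C) (g : I -> idx) s w :
    foldr (fun x acc => eadd (escale (F x) (mono R (g x))) acc) (ezero R) s w =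
    \sum_(x <- s) F x * mono R (g x) w.
  by elim: s => [|x s IH] /=; rewrite ?big_nil ?big_cons //= /eadd /escale IH.
apply: funext => w; rewrite /mcomb /lincomb (sum_mono _ fst snd) (sum_mono _ _ id).
transitivity (\sum_(m <- undup (map snd L)) \sum_(x <- L)
   ((m == x.2)%:R * (x.1 * mono R x.2 w))).
  rewrite exchange_big /=; apply: eq_big_seq => x xL.
  have := sum_indicator x.2 (fun=> x.1 * mono R x.2 w) (undup_uniq (map snd L)).
  by rewrite /= mem_undup (map_f snd xL) => ->.
apply: eq_bigr => m _; rewrite big_distrl [RHS]big_mkcond /=; apply: eq_bigr => x _.
by rewrite eq_sym; case: eqP => [<-|_]; rewrite ?mul1r ?mul0r.
Qed.

Lemma spanning f : fin_supp f -> exists s c, in_ideal q (esub f (lincomb s c)).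
Proof.
move=> /fin_supp_bounded /spanned_bounded [L hL].
by exists (undup (map snd L)), (fun m => \sum_(x <- L | x.2 == m) x.1); rewrite -mcomb_lincomb.
Qed.

End Spanning.

Section Representation.
Variables (R : realType) (q : R).
Hypothesis q_gt0 : 0 < q.
Local Notation C := (R[i]).
Local Notation E := (elt R).
Local Notation p := (q%:C : C).
Local Notation pi := (q%:C^-1 : C).

(* A vector [g : fcomb] stands for the formal, possibly infinite, combination
   [\sum_m g m * mono m].  Row [m] of [row_X] lists the monomials [m'] together
   with the coefficient of [mono m] in the normal form of [X * mono m'], so that
   [act_X] is left multiplication by [X] in these coordinates. *)
Definition fcomb := idx -> C.

Definition row_op (T : idx -> seq (C * idx)) (g : fcomb) : fcomb :=
  fun m => \sum_(y <- T m) y.1 * g y.2.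

Definition row_X1 (m : idx) : seq (C * idx) := let '(r, s, t, u, v) := m in
  [:: ((0 < r)%N%:R, (r.-1, s, t, u, v))].
Definition row_X2 (m : idx) : seq (C * idx) := let '(r, s, t, u, v) := m in
  [:: ((0 < s)%N%:R * pi ^+ r, (r, s.-1, t, u, v))].
Definition row_X2s (m : idx) : seq (C * idx) := let '(r, s, t, u, v) := m in
  [:: ((0 < t)%N%:R * p ^+ r, (r, s, t.-1, u, v));
      ((0 < v)%N%:R * p ^+ r * (1 - p ^+ s.+1 * p ^+ s.+1) * pi ^+ t * pi ^+ t
         * pi ^+ u * pi ^+ u, (r, s.+1, t, u, v.-1));
      ((0 < r)%N%:R * (0 < u)%N%:R * p ^+ r * pi * (1 - p ^+ s.+1 * p ^+ s.+1)
         * pi ^+ s * pi ^+ t, (r.-1, s.+1, t, u.-1, v))].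
Definition row_X1s (m : idx) : seq (C * idx) := let '(r, s, t, u, v) := m in
  [:: ((0 < u)%N%:R * p ^+ s * pi ^+ t, (r, s, t, u.-1, v));
      ((0 < v)%N%:R * (1 - p ^+ r.+1 * p ^+ r.+1) * p ^+ s * p ^+ s * pi ^+ t * pi ^+ t
         * pi ^+ u * pi ^+ u, (r.+1, s, t, u, v.-1))].
Definition row_Q' (m : idx) : seq (C * idx) := let '(r, s, t, u, v) := m in
  [:: ((0 < v)%N%:R * p ^+ r * p ^+ r * p ^+ s * p ^+ s * pi ^+ t * pi ^+ t
         * pi ^+ u * pi ^+ u, (r, s, t, u, v.-1))].

Local Notation act_X1 := (row_op row_X1).
Local Notation act_X2 := (row_op row_X2).
Local Notation act_X1s := (row_op row_X1s).
Local Notation act_X2s := (row_op row_X2s).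
Local Notation act_Q' := (row_op row_Q').

Definition act_Q (g : fcomb) : fcomb :=
  fun m => act_Q' g m + act_X1 (act_X1s g) m + act_X2 (act_X2s g) m.

(* A row only depends on which exponents vanish, so each operator identity
   reduces to 32 identities between rational functions of q. *)
Ltac rows_by_cases :=
  case=> [[[[[|?] [|?]] [|?]] [|?]] [|?]];
  rewrite /act_Q /row_op /row_X1 /row_X2 /row_X1s /row_X2s /row_Q' /= ?big_cons ?big_nil /=;
  rewrite ?exprS ?expr0 ?exprVn; field;
  rewrite ?expf_neq0 ?mulf_neq0 ?invr_eq0 ?qC_neq0 //.

Lemma act_X1X2 g m : act_X1 (act_X2 g) m = p * act_X2 (act_X1 g) m.
Proof. by move: m; rows_by_cases. Qed.
Lemma act_X1sX2 g m : act_X1s (act_X2 g) m = p * act_X2 (act_X1s g) m.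
Proof. by move: m; rows_by_cases. Qed.
Lemma act_X2sX1s g m : act_X2s (act_X1s g) m = p * act_X1s (act_X2s g) m.
Proof. by move: m; rows_by_cases. Qed.
Lemma act_X2sX1 g m : act_X2s (act_X1 g) m = p * act_X1 (act_X2s g) m.
Proof. by move: m; rows_by_cases. Qed.
Lemma act_X2sX2 g m :
  act_X2s (act_X2 g) m = p ^+ 2 * act_X2 (act_X2s g) m + (1 - p ^+ 2) * act_Q g m.
Proof. by move: m; rows_by_cases. Qed.
Lemma act_X1sX1 g m : act_X1s (act_X1 g) m =
  p ^+ 2 * act_X1 (act_X1s g) m + (1 - p ^+ 2) * (act_Q g m - act_X2 (act_X2s g) m).
Proof. by move: m; rows_by_cases. Qed.
Lemma act_Q'X1 g m : act_Q' (act_X1 g) m = p ^+ 2 * act_X1 (act_Q' g) m.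
Proof. by move: m; rows_by_cases. Qed.
Lemma act_Q'X2 g m : act_Q' (act_X2 g) m = p ^+ 2 * act_X2 (act_Q' g) m.
Proof. by move: m; rows_by_cases. Qed.
Lemma act_X1sQ' g m : act_X1s (act_Q' g) m = p ^+ 2 * act_Q' (act_X1s g) m.
Proof. by move: m; rows_by_cases. Qed.
Lemma act_X2sQ' g m : act_X2s (act_Q' g) m = p ^+ 2 * act_Q' (act_X2s g) m.
Proof. by move: m; rows_by_cases. Qed.


Lemma row_op_ext T (h1 h2 : fcomb) : h1 =1 h2 -> row_op T h1 = row_op T h2.
Proof. by move=> /funext ->. Qed.

Lemma row_opD T (h1 h2 : fcomb) m :
  row_op T (fun x => h1 x + h2 x) m = row_op T h1 m + row_op T h2 m.
Proof. by rewrite /row_op -big_split; apply: eq_bigr => y _; rewrite mulrDr. Qed.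

Lemma row_opZ T a (h : fcomb) m : row_op T (fun x => a * h x) m = a * row_op T h m.
Proof. by rewrite /row_op mulr_sumr; apply: eq_bigr => y _; rewrite mulrCA. Qed.

Lemma row_op_sum T (I : Type) (s : seq I) (c : I -> C) (h : I -> fcomb) :
  row_op T (fun m => \sum_(i <- s) c i * h i m) =
  fun m => \sum_(i <- s) c i * row_op T (h i) m.
Proof.
apply: funext => m; rewrite /row_op.
under eq_bigr do rewrite mulr_sumr.
rewrite exchange_big /=; apply: eq_bigr => i _.
by rewrite mulr_sumr; apply: eq_bigr => y _; rewrite mulrCA.
Qed.

Lemma act_X1sX1_Q' g m :
  act_X1s (act_X1 g) m = act_X1 (act_X1s g) m + (1 - p ^+ 2) * act_Q' g m.
Proof. by rewrite act_X1sX1 /act_Q; ring. Qed.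

Lemma act_QX1 g m : act_Q (act_X1 g) m = act_X1 (act_Q g) m.
Proof.
have act_X2X1 h x : act_X2 (act_X1 h) x = p^-1 * act_X1 (act_X2 h) x.
  by rewrite act_X1X2 mulrA mulVf ?mul1r ?qC_neq0.
rewrite /act_Q act_Q'X1 (row_op_ext _ (act_X1sX1_Q' g)) (row_op_ext _ (act_X2sX1 g)).
rewrite row_opD row_opZ row_opZ act_X2X1 !row_opD.
by field; apply: qC_neq0.
Qed.

Lemma act_QX1s g m : act_Q (act_X1s g) m = act_X1s (act_Q g) m.
Proof.
have act_X1sX2s h x : act_X1s (act_X2s h) x = p^-1 * act_X2s (act_X1s h) x.
  by rewrite act_X2sX1s mulrA mulVf ?mul1r ?qC_neq0.
have act_Q'X1s h x : act_Q' (act_X1s h) x = (p ^+ 2)^-1 * act_X1s (act_Q' h) x.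
  by rewrite act_X1sQ' mulrA mulVf ?mul1r ?expf_neq0 ?qC_neq0.
rewrite /act_Q !row_opD act_X1sX1_Q' act_Q'X1s act_X1sX2 (row_op_ext _ (act_X1sX2s g)) row_opZ.
by field; apply: qC_neq0.
Qed.

Lemma act_QX2 g m : act_Q (act_X2 g) m = act_X2 (act_Q g) m.
Proof.
rewrite /act_Q act_Q'X2 (row_op_ext _ (act_X1sX2 g)) (row_op_ext _ (act_X2sX2 g)).
by rewrite row_opZ act_X1X2 !row_opD !row_opZ /act_Q !row_opD; ring.
Qed.

Lemma act_QX2s g m : act_Q (act_X2s g) m = act_X2s (act_Q g) m.
Proof.
rewrite /act_Q !row_opD act_X2sQ' act_X2sX1 (row_op_ext _ (act_X2sX1s g)) row_opZ act_X2sX2.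
by rewrite /act_Q; ring.
Qed.

Definition act_gen (x : gen) : fcomb -> fcomb :=
  match nat_of_ord x with
  | 0 => act_X1 | 1 => act_X1s | 2 => act_X2 | 3 => act_X2s | _ => act_Q
  end.

Definition act_word (w : seq gen) (h : fcomb) : fcomb := foldr act_gen h w.

Lemma act_word_cat a b h : act_word (a ++ b) h = act_word a (act_word b h).
Proof. exact: foldr_cat. Qed.

Lemma act_gen_sum x (I : Type) (s : seq I) (c : I -> C) (h : I -> fcomb) :
  act_gen x (fun m => \sum_(i <- s) c i * h i m) =
  fun m => \sum_(i <- s) c i * act_gen x (h i) m.
Proof.
rewrite /act_gen; case: (nat_of_ord x) => [|[|[|[|n]]]]; try exact: row_op_sum.
apply: funext => m; rewrite /act_Q !row_op_sum /= -!big_split /=.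
by apply: eq_bigr => i _; rewrite !mulrDr.
Qed.

Lemma act_word_sum u (I : Type) (s : seq I) (c : I -> C) (h : I -> fcomb) :
  act_word u (fun m => \sum_(i <- s) c i * h i m) =
  fun m => \sum_(i <- s) c i * act_word u (h i) m.
Proof. by elim: u => [//|x u IH] /=; rewrite /act_word /= -/(act_word u _) IH act_gen_sum. Qed.

Lemma act_word0 u : act_word u (fun _ => 0) = fun _ => 0.
Proof.
have := act_word_sum u [::] (fun _ : unit => 0) (fun _ _ => 0).
by under [in X in X = _ -> _]eq_fun do rewrite big_nil; move=> ->; under eq_fun do rewrite big_nil.
Qed.

(* Elements of [elt R] may have infinite support, so they act through their
   truncations to words of length [< N]. *)
Definition act_trunc N (f : E) (h : fcomb) : fcomb :=
  fun m => \sum_(w <- words_below N) f w * act_word w h m.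

Lemma act_trunc_eword N u h m : (size u < N)%N -> act_trunc N (eword R u) h m = act_word u h m.
Proof.
move=> hu; rewrite /act_trunc /eword.
by rewrite sum_indicator ?uniq_words_below // mem_words_below hu.
Qed.

Lemma act_truncD N f g h m : act_trunc N (eadd f g) h m = act_trunc N f h m + act_trunc N g h m.
Proof. by rewrite /act_trunc -big_split; apply: eq_bigr => w _; rewrite /eadd mulrDl. Qed.

Lemma act_truncZ N a f h m : act_trunc N (escale a f) h m = a * act_trunc N f h m.
Proof. by rewrite /act_trunc mulr_sumr; apply: eq_bigr => w _; rewrite /escale mulrA. Qed.

Lemma act_trunc0 N h m : act_trunc N (ezero R) h m = 0.
Proof. by rewrite /act_trunc big1 // => w _; rewrite /ezero mul0r. Qed.

Lemma sum_nat_indicator n k : \sum_(0 <= i < n) ((i == k)%:R : C) = (k < n)%N%:R.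
Proof.
elim: n => [|n IH]; first by rewrite big_geq.
rewrite big_nat_recr //= IH.
case: (ltngtP k n) => [kn|nk|->] /=.
- by rewrite addr0 ltnS ltnW.
- by rewrite addr0 ltnNge nk.
- by rewrite add0r ltnSn.
Qed.

Lemma sum_take_eq (a w : seq gen) :
  \sum_(0 <= i < (size w).+1) ((a == take i w)%:R : C) = (take (size a) w == a)%:R.
Proof.
transitivity (\sum_(0 <= i < (size w).+1)
               ((take (size a) w == a)%:R * ((i == size a)%:R : C))).
  rewrite big_nat_cond [RHS]big_nat_cond; apply: eq_bigr => i /andP[/andP[_ hi] _].
  rewrite ltnS in hi.
  have [->|na] := eqVneq a (take i w); first by rewrite size_takel // !eqxx mulr1.
  have [ei|ni] := eqVneq i (size a); last by rewrite mulr0.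
  rewrite -ei; have [e|ne] := eqVneq (take i w) a; last by rewrite mul0r.
  by move: na; rewrite e eqxx.
rewrite -mulr_sumr sum_nat_indicator ltnS.
case: eqP => [ea|_]; last by rewrite mul0r.
have hs : (size a <= size w)%N by rewrite -{1}ea size_take_min geq_minr.
by rewrite hs mul1r.
Qed.

Lemma eq_cat_split (w a b : seq gen) :
  (w == a ++ b) = (take (size a) w == a) && (b == drop (size a) w).
Proof.
apply/eqP/andP => [->|[/eqP e1 /eqP e2]].
  by rewrite take_size_cat // drop_size_cat // !eqxx.
by rewrite -[LHS](cat_take_drop (size a)) e1 e2.
Qed.

Lemma sum_words_below_splits N (F : seq gen -> seq gen -> C) :
  (forall a b, (N <= size a + size b)%N -> F a b = 0) ->
  \sum_(w <- words_below N) \sum_(0 <= i < (size w).+1) F (take i w) (drop i w) =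
  \sum_(a <- words_below N) \sum_(b <- words_below N) F a b.
Proof.
move=> hF; symmetry.
transitivity (\sum_(a <- words_below N) \sum_(b <- words_below N)
                \sum_(w <- words_below N) ((w == a ++ b)%:R * F a b)).
  apply: eq_bigr => a _; apply: eq_bigr => b _.
  rewrite (sum_indicator _ (fun _ => F a b)) ?uniq_words_below // mem_words_below size_cat.
  by case: ltnP => // h; rewrite hF.
under eq_bigr do rewrite exchange_big.
rewrite exchange_big big_seq [RHS]big_seq; apply: eq_bigr => w; rewrite mem_words_below => hw.
pose G a := F a (drop (size a) w).
transitivity (\sum_(a <- words_below N) ((take (size a) w == a)%:R * G a)).
  apply: eq_bigr => a _.
  transitivity (\sum_(b <- words_below N)
                  ((take (size a) w == a)%:R * ((b == drop (size a) w)%:R * F a b))).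
    apply: eq_bigr => b _; rewrite eq_cat_split.
    by case: (take _ _ == a); rewrite ?mul1r ?mul0r.
  rewrite -mulr_sumr sum_indicator ?uniq_words_below // mem_words_below size_drop.
  by rewrite (_ : (size w - size a < N)%N = true) //; apply: leq_ltn_trans hw; apply: leq_subr.
transitivity (\sum_(a <- words_below N) \sum_(0 <= i < (size w).+1) ((a == take i w)%:R * G a)).
  by apply: eq_bigr => a _; rewrite -big_distrl /= sum_take_eq.
rewrite exchange_big /= big_nat_cond [RHS]big_nat_cond.
apply: eq_bigr => i /andP[/andP[_ hi] _].
rewrite sum_indicator ?uniq_words_below // mem_words_below /G size_takel; last by rewrite -ltnS.
by rewrite (leq_trans hi hw).
Qed.

Lemma act_trunc_mul N f g N1 N2 h m :
  supp_below f N1 -> supp_below g N2 -> (N1 + N2 <= N)%N ->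
  act_trunc N (emul f g) h m = act_trunc N f (act_trunc N g h) m.
Proof.
move=> hf hg hN; rewrite /act_trunc.
pose F a b := f a * g b * act_word (a ++ b) h m.
have hF a b : (N <= size a + size b)%N -> F a b = 0.
  move=> hab; rewrite /F; case: (leqP N1 (size a)) => ha; first by rewrite hf ?mul0r.
  rewrite hg ?mulr0 ?mul0r //; lia.
transitivity (\sum_(w <- words_below N) \sum_(0 <= i < (size w).+1) F (take i w) (drop i w)).
  apply: eq_bigr => w _; rewrite emulE big_distrl /=; apply: eq_bigr => i _.
  by rewrite /F cat_take_drop.
rewrite sum_words_below_splits //; apply: eq_bigr => a _.
rewrite act_word_sum mulr_sumr; apply: eq_bigr => b _.
by rewrite /F act_word_cat mulrA.
Qed.

Definition acts_as (f : E) (T : fcomb -> fcomb) :=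
  exists K, supp_below f K /\ forall N, (K <= N)%N -> forall h m, act_trunc N f h m = T h m.

Lemma acts_as_ext f T T' : acts_as f T -> (forall h m, T h m = T' h m) -> acts_as f T'.
Proof. by move=> [K [hb hr]] e; exists K; split => // N hN h m; rewrite hr // e. Qed.

Lemma acts_as_eword u : acts_as (eword R u) (act_word u).
Proof.
exists (size u).+1; split; first exact: supp_below_eword.
by move=> N hN h m; rewrite act_trunc_eword.
Qed.

Lemma acts_as_mul f g T1 T2 : acts_as f T1 -> acts_as g T2 ->
  acts_as (emul f g) (fun h => T1 (T2 h)).
Proof.
move=> [K1 [b1 r1]] [K2 [b2 r2]]; exists (K1 + K2); split; first exact: supp_below_mul.
move=> N hN h m; rewrite (act_trunc_mul h m b1 b2 hN) r1; last by lia.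
by congr T1; apply: funext => m'; rewrite r2 //; lia.
Qed.

Lemma acts_as_add f g T1 T2 : acts_as f T1 -> acts_as g T2 ->
  acts_as (eadd f g) (fun h m => T1 h m + T2 h m).
Proof.
move=> [K1 [b1 r1]] [K2 [b2 r2]]; exists (maxn K1 K2); split; first exact: supp_below_add.
by move=> N hN h m; rewrite act_truncD r1 ?r2 //; lia.
Qed.

Lemma acts_as_scale a f T : acts_as f T -> acts_as (escale a f) (fun h m => a * T h m).
Proof.
move=> [K [b r]]; exists K; split; first exact: supp_below_scale.
by move=> N hN h m; rewrite act_truncZ r.
Qed.

Lemma acts_as_sub f g T1 T2 : acts_as f T1 -> acts_as g T2 ->
  acts_as (esub f g) (fun h m => T1 h m - T2 h m).
Proof. by move=> h1 h2; apply: acts_as_ext (acts_as_add h1 (acts_as_scale (-1) h2)) _ => h m; ring. Qed.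

Lemma acts_as_X1 : acts_as (X1 R) act_X1. Proof. exact: acts_as_eword [:: gX1]. Qed.
Lemma acts_as_X1s : acts_as (X1s R) act_X1s. Proof. exact: acts_as_eword [:: gX1s]. Qed.
Lemma acts_as_X2 : acts_as (X2 R) act_X2. Proof. exact: acts_as_eword [:: gX2]. Qed.
Lemma acts_as_X2s : acts_as (X2s R) act_X2s. Proof. exact: acts_as_eword [:: gX2s]. Qed.
Lemma acts_as_Q : acts_as (Q R) act_Q. Proof. exact: acts_as_eword [:: gQ]. Qed.

Lemma acts_as_Q' : acts_as (Q' R) act_Q'.
Proof.
apply: acts_as_ext (acts_as_sub (acts_as_sub acts_as_Q (acts_as_mul acts_as_X1 acts_as_X1s))
                               (acts_as_mul acts_as_X2 acts_as_X2s)) _.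
by move=> h m; rewrite /act_Q; ring.
Qed.

Lemma acts_as_epow f T n : acts_as f T -> acts_as (epow f n) (iter n T).
Proof.
move=> hf; elim: n => [|n IH]; first exact: acts_as_eword [::].
exact: acts_as_mul hf IH.
Qed.

Definition act_mono (m : idx) (h : fcomb) : fcomb := let '(r, s, t, u, v) := m in
  iter r act_X1 (iter s act_X2 (iter t act_X2s (iter u act_X1s (iter v act_Q' h)))).

Lemma acts_as_mono m : acts_as (mono R m) (act_mono m).
Proof.
case: m => [[[[r s] t] u] v]; rewrite /mono.
apply: (acts_as_mul (T1 := fun h => iter r act_X1 (iter s act_X2 (iter t act_X2s (iter u act_X1s h)))))
  (acts_as_epow v acts_as_Q').
apply: (acts_as_mul (T1 := fun h => iter r act_X1 (iter s act_X2 (iter t act_X2s h))))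
  (acts_as_epow u acts_as_X1s).
apply: (acts_as_mul (T1 := fun h => iter r act_X1 (iter s act_X2 h))) (acts_as_epow t acts_as_X2s).
exact: acts_as_mul (acts_as_epow r acts_as_X1) (acts_as_epow s acts_as_X2).
Qed.

Lemma ideal_acts_trivially f : in_ideal q f -> acts_as f (fun _ _ => 0).
Proof.
have rel T1 T2 g1 g2 : acts_as g1 T1 -> acts_as g2 T2 ->
    (forall h m, T1 h m = T2 h m) -> acts_as (esub g1 g2) (fun _ _ => 0).
  by move=> h1 h2 e; apply: acts_as_ext (acts_as_sub h1 h2) _ => h m; rewrite e subrr.
elim=> {f} [i hi | f g _ hf _ hg | a f _ hf | u f _ hf | u f _ hf | f g _ hf e].
- move: hi; rewrite /rels /=.
  case: i => [|[|[|[|[|[|[|[|[|[|i]]]]]]]]]] hi //=; apply: rel;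
    do ?[exact: acts_as_X1 | exact: acts_as_X1s | exact: acts_as_X2 | exact: acts_as_X2s
        | exact: acts_as_Q | apply: acts_as_mul | apply: acts_as_scale | apply: acts_as_sub
        | apply: acts_as_add].
  + exact: act_X1X2.
  + exact: act_X1sX2.
  + exact: act_X2sX2.
  + exact: act_X1sX1.
  + exact: act_QX1.
  + exact: act_QX1s.
  + exact: act_QX2.
  + exact: act_QX2s.
  + exact: act_X2sX1s.
  + exact: act_X2sX1.
- by apply: acts_as_ext (acts_as_add hf hg) _ => h m; rewrite addr0.
- by apply: acts_as_ext (acts_as_scale a hf) _ => h m; rewrite mulr0.
- by apply: acts_as_ext (acts_as_mul (acts_as_eword u) hf) _ => h m; rewrite act_word0.
- exact: acts_as_mul hf (acts_as_eword u).
- by rewrite -(funext e).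
Qed.

Definition fdelta (m0 : idx) : fcomb := fun m => (m == m0)%:R.

Ltac delta_by_cases := apply: funext; case=> [[[[[|?] [|?]] [|?]] [|?]] [|?]];
  rewrite /fdelta /row_op /row_X1 /row_X2 /row_X1s /row_X2s /row_Q' /= ?big_cons ?big_nil /=;
  rewrite ?xpair_eqE /= ?eqSS ?andbF ?andFb ?expr0 /=; ring.

Lemma act_Q'_fdelta v : act_Q' (fdelta (0, 0, 0, 0, v)) = fdelta (0, 0, 0, 0, v.+1).
Proof. by delta_by_cases. Qed.
Lemma act_X1s_fdelta u v : act_X1s (fdelta (0, 0, 0, u, v)) = fdelta (0, 0, 0, u.+1, v).
Proof. by delta_by_cases. Qed.
Lemma act_X2s_fdelta t u v : act_X2s (fdelta (0, 0, t, u, v)) = fdelta (0, 0, t.+1, u, v).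
Proof. by delta_by_cases. Qed.
Lemma act_X2_fdelta s t u v : act_X2 (fdelta (0, s, t, u, v)) = fdelta (0, s.+1, t, u, v).
Proof. by delta_by_cases. Qed.
Lemma act_X1_fdelta r s t u v : act_X1 (fdelta (r, s, t, u, v)) = fdelta (r.+1, s, t, u, v).
Proof. by delta_by_cases. Qed.

Lemma act_mono_fdelta0 m : act_mono m (fdelta (0, 0, 0, 0, 0)) = fdelta m.
Proof.
case: m => [[[[r s] t] u] v] /=.
have -> : iter v act_Q' (fdelta (0, 0, 0, 0, 0)) = fdelta (0, 0, 0, 0, v).
  by elim: v => [//|v IH] /=; rewrite IH act_Q'_fdelta.
have -> : iter u act_X1s (fdelta (0, 0, 0, 0, v)) = fdelta (0, 0, 0, u, v).
  by elim: u => [//|u IH] /=; rewrite IH act_X1s_fdelta.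
have -> : iter t act_X2s (fdelta (0, 0, 0, u, v)) = fdelta (0, 0, t, u, v).
  by elim: t => [//|t IH] /=; rewrite IH act_X2s_fdelta.
have -> : iter s act_X2 (fdelta (0, 0, t, u, v)) = fdelta (0, s, t, u, v).
  by elim: s => [//|s IH] /=; rewrite IH act_X2_fdelta.
by elim: r => [//|r IH] /=; rewrite IH act_X1_fdelta.
Qed.

Lemma act_trunc_lincomb N s c h x :
  act_trunc N (lincomb s c) h x = \sum_(m' <- s) c m' * act_trunc N (mono R m') h x.
Proof.
elim: s => [|m' s IH] /=; first by rewrite act_trunc0 big_nil.
by rewrite act_truncD act_truncZ IH big_cons.
Qed.

Lemma acts_as_monos (s : seq idx) : exists K, forall N, (K <= N)%N ->
  forall m h x, m \in s -> act_trunc N (mono R m) h x = act_mono m h x.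
Proof.
elim: s => [|m' s [K IH]]; first by exists 0.
have [K1 [_ h1]] := acts_as_mono m'.
exists (maxn K K1) => N hN m h x; rewrite inE => /orP[/eqP -> | hm].
  by apply: h1; apply: leq_trans hN; apply: leq_maxr.
by apply: IH => //; apply: leq_trans hN; apply: leq_maxl.
Qed.

(* Applied to [fdelta 0], i.e. to the monomial 1, [lincomb s c] returns the coefficients [c]. *)
Lemma independence (s : seq idx) (c : idx -> C) :
  uniq s -> in_ideal q (lincomb s c) -> forall m, m \in s -> c m = 0.
Proof.
move=> us /ideal_acts_trivially [K0 [_ h0]] m ms.
have [K1 h1] := acts_as_monos s.
have := h0 (maxn K0 K1) (leq_maxl _ _) (fdelta (0, 0, 0, 0, 0)) m.
rewrite act_trunc_lincomb (eq_big_seq (fun m' => (m' == m)%:R * c m')); last first.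
  move=> m' hm'; rewrite h1 ?leq_maxr // act_mono_fdelta0 /fdelta mulrC.
  by rewrite eq_sym.
by rewrite sum_indicator // ms.
Qed.

End Representation.

Theorem lemma3p5p5 (R : realType) (q : R) (hq0 : 0 < q) (hq1 : q < 1) :
  (forall f : elt R, fin_supp f ->
     exists (s : seq idx) (c : idx -> R[i]),
       in_ideal q (esub f (lincomb s c)))
  /\
  (forall (s : seq idx) (c : idx -> R[i]), uniq s ->
     in_ideal q (lincomb s c) -> forall m, m \in s -> c m = 0).
Proof.
by split; [apply: spanning | apply: independence].
Qed.
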